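(* Let $X=\{k^2:k\in\mathbb N\}\subset\mathbb R$ with the metric $d_X(x,y)=|x-y|$, write $x^k=k^2$, and let $X_n=\{x^k_n:k\in\mathbb N\}$, $n\in\overline{\mathbb N}$, be copies of $X$ realized in the Banach space $\ell_1(\overline{\mathbb N})$ (with standard unit vectors $e_0,e_1,\dots$) by $x^k_0=k^2e_0$, and for $n\ge1$: $x^k_n=k^2e_0+e_n$ if $k\ge n$, $x^k_n=(k^2+n)e_n$ if $k<n$. Let $d$ be the metric on $X_0\sqcup\bigsqcup_{n\ge1}X_n$ induced by the $\ell_1$-norm (so $d$ restricts to $d_X$ on $X_0=X$, $d(x^k_0,x^k_n)=1$ for $k\ge n$, and $d(x_0^k,x_n^k)\to\infty$ as $n\to\infty$). Then, with $Y=\bigsqcup_{n\ge1}X_n\cong X\times\mathbb N$ and the identification $T\leftrightarrow(T_n)_{n\in\mathbb N}$, $$M_{Y,d}=\ell_2(\mathbb K(H_X))+\ell_2(\mathbb D(H_X))'_0,$$ i.e. $M_{Y,d}$ is exactly the set of sums $K+D$ with $K\in\ell_2(\mathbb K(H_X))$ and $D\in\ell_2(\mathbb D(H_X))'_0$.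
   Context: $\overline{\mathbb N}=\mathbb N\cup\{0\}$. $H_Z=\ell^2(Z)$ with standard basis. For a metric $d$ on $X\sqcup Y$ extending $d_X$, $M_{Y,d}$ is the norm closure in $\mathbb B(H_X,H_Y)$ of bounded operators $T:H_X\to H_Y$ of finite propagation (there is $L$ with $(\delta_y,T\delta_x)=0$ whenever $d(x,y)\ge L$). $H_Y=\bigoplus_{n\ge1}H_{X_n}$; $T_n=Q_nT$ with $Q_n$ the projection onto $H_{X_n}$, regarded as an operator on $H_X$ via $\delta_{x^k_n}\leftrightarrow\delta_{x^k}$. $\mathbb K(H_X)$ denotes compact operators and $\mathbb D(H_X)$ the diagonal operators (with respect to $\{\delta_{x^k}\}$). For a $C^*$-algebra $A\subset\mathbb B(H_X)$, $\ell_2(A)$ is the set of sequences $(a_n)$ in $A$ with $\sum a_n^*a_n$ norm convergent, and $\ell_2(A)'$ the set of sequences $(a_n)$ in $A$ with uniformly bounded partial sums $\|\sum_{n=1}^m a_n^*a_n\|$; both are identified with sets of bounded operators $H_X\to H_Y$. $\ell_2(\mathbb D(H_X))'_0$ is the set of $(D_n)\in\ell_2(\mathbb D(H_X))'$ with $D_n=\mathrm{diag}(d^1_n,d^2_n,\dots)$ and $d^i_n=0$ for all $i<n$. *)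

From HB Require Import structures.
From mathcomp Require Import all_boot all_order all_algebra.
From mathcomp Require Import all_classical all_reals all_analysis.
From mathcomp Require Import complex.
Set Implicit Arguments. Unset Strict Implicit. Unset Printing Implicit Defensive.
Import Order.TTheory GRing.Theory Num.Theory.
Local Open Scope ring_scope.

(* Conventions (0-based encodings):
   - basis index j : nat of H_X = l^2(X) stands for the point x^(j+1) = (j+1)^2 of X;
   - block index n : nat of H_Y = (+)_{n>=1} H_{X_n} stands for the copy X_(n+1);
   - an operator T : H_X -> H_Y is encoded by its matrix
       T n i j = (delta_{x^(i+1)_(n+1)}, T delta_{x^(j+1)}),
     and T_n = Q_n T (an operator on H_X) is the block  fun i j => T n i j;
   - an operator A on H_X is encoded by its matrix A i j = (delta_{x^(i+1)}, A delta_{x^(j+1)}).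
   A matrix is a bounded operator iff it is bounded on finitely supported
   vectors; a finitely supported vector is given by (N, v), meaning
   sum_(j<N) v j delta_{x^(j+1)}. *)

Section Defs.
Variable R : realType.
Local Notation C := R[i].

Definition nsq (z : C) : R := let: Complex a b := z in a ^+ 2 + b ^+ 2.

Definition vnorm2 (N : nat) (v : nat -> C) : R := \sum_(j < N) nsq (v j).

Definition opX := nat -> nat -> C.
Definition appX (A : opX) (N : nat) (v : nat -> C) (i : nat) : C :=
  \sum_(j < N) A i j * v j.

Definition normX_le (A : opX) (c : R) : Prop :=
  0 <= c /\ forall N v,
    (\sum_(i <oo) (nsq (appX A N v i))%:E <= (c ^+ 2 * vnorm2 N v)%:E)%E.
Definition boundedX (A : opX) : Prop := exists c, normX_le A c.

(* K(H_X): bounded operators mapping the unit ball to a totally bounded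
   (= relatively compact, H_X being complete) set; it suffices to test on
   the dense set of finitely supported vectors of the unit ball. *)
Definition compactX (A : opX) : Prop :=
  boundedX A /\ forall eps : R, 0 < eps ->
    exists (r : nat) (w : nat -> nat -> C), forall N v, vnorm2 N v <= 1 ->
      exists k, (k < r)%N /\
        (\sum_(i <oo) (nsq (appX A N v i - w k i))%:E <= (eps ^+ 2)%:E)%E.

Definition diagX (A : opX) : Prop :=
  boundedX A /\ forall i j, i <> j -> A i j = 0.

Definition opY := nat -> nat -> nat -> C.
Definition block (T : opY) (n : nat) : opX := fun i j => T n i j.
Definition appY (T : opY) (N : nat) (v : nat -> C) (n i : nat) : C :=
  \sum_(j < N) T n i j * v j.

Definition normY_le (T : opY) (c : R) : Prop :=
  0 <= c /\ forall N v,
    (\sum_(n <oo) \sum_(i <oo) (nsq (appY T N v n i))%:E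
       <= (c ^+ 2 * vnorm2 N v)%:E)%E.
Definition boundedY (T : opY) : Prop := exists c, normY_le T c.

Definition subY (T S : opY) : opY := fun n i j => T n i j - S n i j.
Definition addY (T S : opY) : opY := fun n i j => T n i j + S n i j.

(* points of l_1(N-bar), as functions nat -> R; x^k_n for n in N-bar, k >= 1 *)
Definition xpt (n k : nat) : nat -> R := fun m =>
  if n == 0%N then (if m == 0%N then (k ^ 2)%:R else 0)
  else if (n <= k)%N then
    (if m == 0%N then (k ^ 2)%:R else if m == n then 1 else 0)
  else (if m == n then (k ^ 2 + n)%:R else 0).

(* l_1 distance between x^k_n and x^j_0 (both supported in {0,..,n}) *)
Definition dist_l1 (n k j : nat) : R :=
  \sum_(m < n.+1) `|xpt n k m - xpt 0 j m|.

Definition finite_prop (T : opY) : Prop :=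
  exists L : R, forall n i j,
    L <= dist_l1 n.+1 i.+1 j.+1 -> T n i j = 0.

Definition MYd (T : opY) : Prop :=
  boundedY T /\ forall eps : R, 0 < eps ->
    exists S, boundedY S /\ finite_prop S /\ normY_le (subY T S) eps.

(* sum_{m <= n < m'} ||T_n v||^2 = < (sum_{m<=n<m'} T_n^* T_n) v, v > *)
Definition blocksum (T : opY) (m m' N : nat) (v : nat -> C) : \bar R :=
  (\sum_(m <= n < m') \sum_(i <oo) (nsq (appY T N v n i))%:E)%E.

(* l_2(A): T_n in A for all n, and sum_n T_n^* T_n is norm convergent, i.e.
   (B(H_X) being complete) norm-Cauchy; for the positive operator
   P = sum_{m<=n<m'} T_n^* T_n, ||P|| <= eps iff <P v, v> <= eps ||v||^2. *)
Definition ell2 (P : opX -> Prop) (T : opY) : Prop :=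
  (forall n, P (block T n)) /\
  forall eps : R, 0 < eps -> exists m0 : nat, forall m m' N v,
    (m0 <= m)%N -> (blocksum T m m' N v <= (eps * vnorm2 N v)%:E)%E.

Definition ell2' (P : opX -> Prop) (T : opY) : Prop :=
  (forall n, P (block T n)) /\
  exists c : R, forall m N v, (blocksum T 0 m N v <= (c * vnorm2 N v)%:E)%E.

(* l_2(D(H_X))'_0: additionally d^i_n = 0 for i < n (1-based), i.e. in the
   0-based encoding T n i i = 0 whenever i < n *)
Definition ell2'0D (T : opY) : Prop :=
  ell2' diagX T /\ forall n i, (i < n)%N -> T n i i = 0.

End Defs.

(* Two points at bounded l_1-distance are either an "attached" pair x^k_0, x^k_n
   with k >= n, at distance 1, or have all of k, n and the other index bounded.
   Hence a finite-propagation operator is the sum of a diagonal operator with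
   d^i_n = 0 for i < n and an operator supported in a finite box of indices.
   For T in M_{Y,d}, the diagonal part is bounded (test T on basis vectors),
   and the off-diagonal part is a norm limit of box-supported operators; their
   blocks have finitely many rows, hence are compact, and they vanish beyond the
   box, so sum_n T_n^* T_n converges.  Conversely K in l_2(K(H_X)) is a norm
   limit of its box truncations: the tail of sum_n K_n^* K_n controls the blocks
   n >= m0, and for each of the first m0 blocks compactness gives uniformly small
   row tails, while each of finitely many rows has small column tails.  The
   diagonal summand D has propagation 1. *)

From HB Require Import structures.
From mathcomp Require Import all_boot all_order all_algebra.
From mathcomp Require Import all_classical all_reals all_analysis.
From mathcomp Require Import complex.
From mathcomp Require Import zify ring lra.
Set Implicit Arguments. Unset Strict Implicit. Unset Printing Implicit Defensive.
Import Order.TTheory GRing.Theory Num.Theory.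
Local Open Scope classical_set_scope.
Local Open Scope ring_scope.

Section MYd_decomposition.
Variable R : realType.
Local Notation C := R[i].
Implicit Types (z w : C) (v : nat -> C) (A F : opX R) (T S K D : opY R).

Lemma nsqE z : nsq z = complex.Re z ^+ 2 + complex.Im z ^+ 2. Proof. by case: z. Qed.

Lemma nsq_ge0 z : 0 <= nsq z. Proof. by rewrite nsqE addr_ge0 ?sqr_ge0. Qed.

Lemma nsq0 : nsq (0 : C) = 0. Proof. by rewrite nsqE expr0n /= addr0. Qed.

Lemma nsq_eq0 z : nsq z = 0 -> z = 0.
Proof.
case: z => a b /= /eqP; rewrite paddr_eq0 ?sqr_ge0 // !sqrf_eq0.
by case/andP => /eqP -> /eqP ->.
Qed.

Lemma nsqM z w : nsq (z * w) = nsq z * nsq w.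
Proof. by case: z; case: w => a b c d /=; ring. Qed.

Lemma nsqD_le z w : nsq (z + w) <= 2 * nsq z + 2 * nsq w.
Proof.
case: z; case: w => a b c d /=.
by have := sqr_ge0 (a - c); have := sqr_ge0 (b - d); nra.
Qed.

Lemma nsqB_le z w : nsq (z - w) <= 2 * nsq z + 2 * nsq w.
Proof. by have := nsqD_le z (- w); case: w => a b /=; rewrite !sqrrN. Qed.

Lemma complexReD z w : complex.Re (z + w) = complex.Re z + complex.Re w.
Proof. by case: z; case: w. Qed.

Lemma complexImD z w : complex.Im (z + w) = complex.Im z + complex.Im w.
Proof. by case: z; case: w. Qed.

Lemma complexReM z w :
  complex.Re (z * w) = complex.Re z * complex.Re w - complex.Im z * complex.Im w.
Proof. by case: z; case: w. Qed.

Lemma complexImM z w :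
  complex.Im (z * w) = complex.Re z * complex.Im w + complex.Im z * complex.Re w.
Proof. by case: z; case: w. Qed.

Lemma complexRe_sum I (r : seq I) (P : pred I) (f : I -> C) :
  complex.Re (\sum_(i <- r | P i) f i) = \sum_(i <- r | P i) complex.Re (f i).
Proof. exact: (big_morph _ complexReD). Qed.

Lemma complexIm_sum I (r : seq I) (P : pred I) (f : I -> C) :
  complex.Im (\sum_(i <- r | P i) f i) = \sum_(i <- r | P i) complex.Im (f i).
Proof. exact: (big_morph _ complexImD). Qed.

(** * Norm bounds through finite partial sums *)

Lemma nneseries_leP (u : nat -> R) x : (forall i, 0 <= u i) ->
  (\sum_(i <oo) (u i)%:E <= x%:E)%E <-> forall M, \sum_(0 <= i < M) u i <= x.
Proof.
move=> u0; split=> [H M|H].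
  rewrite -lee_fin; apply: le_trans H; rewrite -sumEFin.
  by apply: nneseries_lim_ge => n _ _; rewrite lee_fin.
apply: lime_le; first by apply: is_cvg_nneseries => n _ _; rewrite lee_fin.
by apply: nearW => M; rewrite sumEFin lee_fin.
Qed.

Lemma sum_nneseries_leP (f : nat -> nat -> R) m m' x : (forall n i, 0 <= f n i) ->
  (\sum_(m <= n < m') \sum_(i <oo) (f n i)%:E <= x%:E)%E <->
  forall M, \sum_(m <= n < m') \sum_(0 <= i < M) f n i <= x.
Proof.
move=> f0; split=> [H M|H].
  rewrite -lee_fin; apply: le_trans H; rewrite -sumEFin; apply: lee_sum => n _.
  by rewrite -sumEFin; apply: nneseries_lim_ge => k _ _; rewrite lee_fin.
rewrite -nneseries_sum_nat; last by move=> *; rewrite lee_fin.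
apply: lime_le.
  by apply: is_cvg_nneseries => *; apply: sume_ge0 => *; rewrite lee_fin.
apply: nearW => M; under eq_bigr do rewrite sumEFin.
by rewrite sumEFin lee_fin exchange_big_nat /=; apply: H.
Qed.

Lemma nneseries2_leP (f : nat -> nat -> R) x : (forall n i, 0 <= f n i) ->
  (\sum_(n <oo) \sum_(i <oo) (f n i)%:E <= x%:E)%E <->
  forall M1 M2, \sum_(0 <= n < M1) \sum_(0 <= i < M2) f n i <= x.
Proof.
move=> f0; split=> [H M1|H].
  apply/sum_nneseries_leP => //; apply: le_trans H.
  by apply: nneseries_lim_ge => n _ _; apply: nneseries_ge0 => *; rewrite lee_fin.
apply: lime_le.
  by apply: is_cvg_nneseries => n _ _; apply: nneseries_ge0 => *; rewrite lee_fin.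
by apply: nearW => M1; apply/sum_nneseries_leP.
Qed.

Definition normX2_le A (c : R) := forall N v M,
  \sum_(0 <= i < M) nsq (appX A N v i) <= c * vnorm2 N v.

Definition normY2_le T (c : R) := forall N v M1 M2,
  \sum_(0 <= n < M1) \sum_(0 <= i < M2) nsq (appY T N v n i) <= c * vnorm2 N v.

Lemma normX_leE A c : normX_le A c <-> 0 <= c /\ normX2_le A (c ^+ 2).
Proof.
split=> -[c0 H]; split=> // N v; first by apply/nneseries_leP => // i; exact: nsq_ge0.
by apply/nneseries_leP => [i|]; [exact: nsq_ge0|exact: H].
Qed.

Lemma normY_leE T c : normY_le T c <-> 0 <= c /\ normY2_le T (c ^+ 2).
Proof.
split=> -[c0 H]; split=> // N v; first by apply/nneseries2_leP => // *; exact: nsq_ge0.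
by apply/nneseries2_leP => [*|]; [exact: nsq_ge0|exact: H].
Qed.

Lemma blocksum_leP T m m' N v x : (blocksum T m m' N v <= x%:E)%E <->
  forall M, \sum_(m <= n < m') \sum_(0 <= i < M) nsq (appY T N v n i) <= x.
Proof. by apply: sum_nneseries_leP => *; exact: nsq_ge0. Qed.

Lemma vnorm2_ge0 N v : 0 <= vnorm2 N v.
Proof. by apply: sumr_ge0 => *; exact: nsq_ge0. Qed.

Lemma normX2_leW A a b : normX2_le A a -> a <= b -> normX2_le A b.
Proof. by move=> H ab N v M; rewrite (le_trans (H N v M)) // ler_wpM2r ?vnorm2_ge0. Qed.

Lemma normY2_leW T a b : normY2_le T a -> a <= b -> normY2_le T b.
Proof.
by move=> H ab N v M1 M2; rewrite (le_trans (H N v M1 M2)) // ler_wpM2r ?vnorm2_ge0.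
Qed.

Lemma boundedXE A : boundedX A <-> exists2 c, 0 <= c & normX2_le A c.
Proof.
split=> [[c /normX_leE [c0 H]]|[c c0 H]]; first by exists (c ^+ 2); rewrite ?sqr_ge0.
exists (c + 1); apply/normX_leE; split; first lra.
by apply: normX2_leW H _; nra.
Qed.

Lemma boundedYE T : boundedY T <-> exists2 c, 0 <= c & normY2_le T c.
Proof.
split=> [[c /normY_leE [c0 H]]|[c c0 H]]; first by exists (c ^+ 2); rewrite ?sqr_ge0.
exists (c + 1); apply/normY_leE; split; first lra.
by apply: normY2_leW H _; nra.
Qed.

Lemma ler_sum_2sum m n (f g h : nat -> R) : (forall i, h i <= 2 * f i + 2 * g i) ->
  \sum_(m <= i < n) h i <= 2 * \sum_(m <= i < n) f i + 2 * \sum_(m <= i < n) g i.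
Proof. by move=> fgh; rewrite !mulr_sumr -big_split /=; apply: ler_sum => i _. Qed.

Lemma normY2_le_of_nsq_le U T S a b :
  (forall N v n i,
     nsq (appY U N v n i) <= 2 * nsq (appY T N v n i) + 2 * nsq (appY S N v n i)) ->
  normY2_le T a -> normY2_le S b -> normY2_le U (2 * a + 2 * b).
Proof.
move=> UTS HT HS N v M1 M2; rewrite mulrDl -!mulrA.
apply: le_trans (lerD (ler_wpM2l _ (HT N v M1 M2)) (ler_wpM2l _ (HS N v M1 M2))) => //.
by apply: ler_sum_2sum => n; apply: ler_sum_2sum => i; apply: UTS.
Qed.

Lemma appY_addY T S N v n i : appY (addY T S) N v n i = appY T N v n i + appY S N v n i.
Proof. by rewrite /appY -big_split; apply: eq_bigr => j _; rewrite /addY mulrDl. Qed.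

Lemma appY_subY T S N v n i : appY (subY T S) N v n i = appY T N v n i - appY S N v n i.
Proof. by rewrite /appY -sumrB; apply: eq_bigr => j _; rewrite /subY mulrBl. Qed.

Lemma normY2_leD T S a b :
  normY2_le T a -> normY2_le S b -> normY2_le (addY T S) (2 * a + 2 * b).
Proof. by apply: normY2_le_of_nsq_le => *; rewrite appY_addY nsqD_le. Qed.

Lemma normY2_leB T S a b :
  normY2_le T a -> normY2_le S b -> normY2_le (subY T S) (2 * a + 2 * b).
Proof. by apply: normY2_le_of_nsq_le => *; rewrite appY_subY nsqB_le. Qed.

Lemma sum_nat_ge_term m k (f : nat -> R) : (forall i, 0 <= f i) -> (m <= k)%N ->
  f k <= \sum_(m <= i < k.+1) f i.
Proof. by move=> f0 mk; rewrite big_nat_recr //= lerDr sumr_ge0. Qed.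

Lemma normX2_le_block T c n : normY2_le T c -> normX2_le (block T n) c.
Proof.
move=> H N v M; apply: le_trans (H N v n.+1 M).
apply: (sum_nat_ge_term (f := fun n => \sum_(0 <= i < M) nsq (appY T N v n i))) => // k.
by apply: sumr_ge0 => *; exact: nsq_ge0.
Qed.

Lemma sum_nat_le_upper (f : nat -> R) m n n' : (forall i, 0 <= f i) -> (n <= n')%N ->
  \sum_(m <= i < n) f i <= \sum_(m <= i < n') f i.
Proof. by move=> f0; apply: (nondecreasing_series (P := xpredT)) => *. Qed.

Lemma sum_nat_le_lower (f : nat -> R) m m' n : (forall i, 0 <= f i) -> (m <= m')%N ->
  \sum_(m' <= i < n) f i <= \sum_(m <= i < n) f i.
Proof.
move=> f0 mm'; case: (leqP m' n) => m'n; last by rewrite big_geq ?sumr_ge0 // ltnW.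
by rewrite (big_cat_nat mm' m'n) /= lerDr sumr_ge0.
Qed.

Lemma sum_nat_split_le (f : nat -> R) m M : (forall i, 0 <= f i) ->
  \sum_(0 <= i < M) f i <= \sum_(0 <= i < m) f i + \sum_(m <= i < M) f i.
Proof.
move=> f0; case: (leqP m M) => mM; first by rewrite -big_cat_nat.
by rewrite (big_geq (ltnW mM)) addr0 sum_nat_le_upper // ltnW.
Qed.

Lemma sum_nat_trunc_le (f : nat -> R) M B : (forall i, 0 <= f i) ->
  \sum_(0 <= i < M) (if (i < B)%N then f i else 0) <= \sum_(0 <= i < B) f i.
Proof.
move=> f0; rewrite -big_mkcond (big_nat_widen 0 B (maxn M B) xpredT) ?leq_maxr //.
by apply: (nondecreasing_series (P := fun i => (i < B)%N)) => //; exact: leq_maxl.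
Qed.

(** * The diagonal part *)

Definition basis_vec (i : nat) : nat -> C := fun j => (j == i)%:R.

Lemma vnorm2_basis_vec i : vnorm2 i.+1 (basis_vec i) = 1.
Proof.
rewrite /vnorm2 big_ord_recr big1 /= => [|j _]; last by rewrite /basis_vec /= ltn_eqF // nsq0.
by rewrite /basis_vec eqxx add0r nsqE /= expr1n expr0n addr0.
Qed.

Lemma appY_basis_vec T n k i : appY T i.+1 (basis_vec i) n k = T n k i.
Proof.
rewrite /appY big_ord_recr big1 /= => [|j _]; last by rewrite /basis_vec /= ltn_eqF // mulr0.
by rewrite /basis_vec eqxx add0r mulr1.
Qed.

Lemma sum_nsq_diag_le T c i M : normY2_le T c -> \sum_(0 <= n < M) nsq (T n i i) <= c.
Proof.
move=> H; have := H i.+1 (basis_vec i) M i.+1; rewrite vnorm2_basis_vec mulr1.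
apply: le_trans; apply: ler_sum => n _.
rewrite -(appY_basis_vec T n i i).
apply: (sum_nat_ge_term (f := fun k => nsq (appY T i.+1 (basis_vec i) n k))) => // k.
exact: nsq_ge0.
Qed.

(* The entries of [T] between x^(i+1)_0 and x^(i+1)_(n+1) for n <= i: these
   points are at distance 1, and all other pairs at bounded distance lie in a
   finite box (dist_l1_lt). *)
Definition diag_part T : opY R :=
  fun n i j => if (i == j) && (n <= i)%N then T n i j else 0.

Definition offdiag_part T : opY R := subY T (diag_part T).

Lemma appY_diag_part T N v n i :
  appY (diag_part T) N v n i = if (i < N)%N && (n <= i)%N then T n i i * v i else 0.
Proof.
rewrite /appY (eq_bigr (fun j : 'I_N => if (j : nat) == i then
  (if (n <= i)%N then T n i i * v i else 0) else 0)); last first.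
  move=> j _; rewrite /diag_part.
  by case: (eqVneq (j : nat) i) => [<-|_] /=; [case: ifP; rewrite ?mul0r|rewrite mul0r].
rewrite -big_mkcond (big_ord1_eq _ (fun=> if (n <= i)%N then T n i i * v i else 0)).
by case: (i < N)%N.
Qed.

Lemma normY2_le_diag_part T c : 0 <= c -> normY2_le T c -> normY2_le (diag_part T) c.
Proof.
move=> c0 H N v M1 M2; under eq_bigr do under eq_bigr do rewrite appY_diag_part.
rewrite exchange_big_nat /= (le_trans _ (_ : \sum_(0 <= i < M2)
  (if (i < N)%N then nsq (v i) * c else 0) <= _)) //.
  apply: ler_sum => i _; case: (i < N)%N => /=; last by rewrite big1 // => *; exact: nsq0.
  apply: le_trans (_ : \sum_(0 <= n < M1) nsq (T n i i) * nsq (v i) <= _).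
    by apply: ler_sum => n _; case: (n <= i)%N; rewrite ?nsqM // nsq0 mulr_ge0 ?nsq_ge0.
  by rewrite -mulr_suml mulrC ler_wpM2l ?nsq_ge0 ?sum_nsq_diag_le.
apply: le_trans (sum_nat_trunc_le _ _ _) _ => [i|]; first by rewrite mulr_ge0 ?nsq_ge0.
by rewrite -mulr_suml mulrC /vnorm2 big_mkord.
Qed.

Lemma diag_part_ell2'0D T : boundedY T -> ell2'0D (diag_part T).
Proof.
case/boundedYE=> c c0 /(normY2_le_diag_part c0) H; split; last first.
  by move=> n i ni; rewrite /diag_part eqxx leqNgt ni.
split=> [n|]; last by exists c => m N v; apply/blocksum_leP => M; exact: H.
split; first by apply/boundedXE; exists c; last exact: normX2_le_block.
by move=> i j /eqP ij; rewrite /block /diag_part (negbTE ij).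
Qed.

(** * The metric and finite propagation *)

Lemma dist_l1E n k j :
  dist_l1 R n.+1 k j = `|xpt R n.+1 k 0 - (j ^ 2)%:R| + `|xpt R n.+1 k n.+1|.
Proof.
rewrite /dist_l1 big_ord_recr big_ord_recl /= big1 ?addr0 ?subr0 // => m _.
rewrite /xpt /= /bump /= add1n eqSS ltn_eqF //.
by case: (n.+1 <= k)%N; rewrite subr0 normr0.
Qed.

Lemma dist_l1_attached n k j : (n < k)%N ->
  dist_l1 R n.+1 k j = `|(k ^ 2)%:R - (j ^ 2)%:R| + 1.
Proof. by move=> nk; rewrite dist_l1E /xpt /= nk eqxx normr1. Qed.

Lemma dist_l1_detached n k j : (k <= n)%N ->
  dist_l1 R n.+1 k j = (j ^ 2)%:R + (k ^ 2 + n.+1)%:R.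
Proof. by move=> kn; rewrite dist_l1E /xpt /= ltnNge kn /= eqxx sub0r normrN !normr_nat. Qed.

Lemma dist_l1_diag n i : (n <= i)%N -> dist_l1 R n.+1 i.+1 i.+1 = 1.
Proof. by move=> ni; rewrite dist_l1_attached // subrr normr0 add0r. Qed.

Lemma dist_l1_le n i j : dist_l1 R n.+1 i.+1 j.+1 <= (i.+1 ^ 2 + j.+1 ^ 2 + n.+1)%:R.
Proof.
case: (leqP n i) => ni; last by rewrite dist_l1_detached // -natrD addnCA addnA.
rewrite dist_l1_attached // !natrD; apply: lerD; last by rewrite ler1n.
by apply: le_trans (ler_normB _ _) _; rewrite !normr_nat.
Qed.

Lemma sum_le_dist_sqr (a b : nat) : a != b -> (a + b)%:R <= `|(a ^ 2)%:R - (b ^ 2)%:R : R|.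
Proof.
have key x y : (x < y)%N -> ((x + y)%:R : R) <= `|(y ^ 2)%:R - (x ^ 2)%:R|.
  move=> xy; rewrite -natrB; last by rewrite leq_exp2r // ltnW.
  by rewrite normr_nat ler_nat subn_sqr addnC leq_pmull // subn_gt0.
by case: ltngtP => // [ab|ba] _; [rewrite distrC key|rewrite addnC key].
Qed.

Lemma dist_l1_lt n i j (B : nat) : dist_l1 R n.+1 i.+1 j.+1 < B%:R ->
  (i == j) && (n <= i)%N || [&& (n < B)%N, (i < B)%N & (j < B)%N].
Proof.
case: (leqP n i) => ni dB.
  case: eqVneq => [//|ij] /=; rewrite dist_l1_attached // in dB.
  have hij := @sum_le_dist_sqr i.+1 j.+1 ij.
  have : ((i.+1 + j.+1)%:R : R) < B%:R by lra.
  by rewrite ltr_nat; clear -ni; lia.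
rewrite dist_l1_detached // -natrD ltr_nat orbC in dB *.
have sqr_ge (k : nat) : (k <= k ^ 2)%N by case: k => // k; rewrite -mulnn leq_pmull.
move: dB (sqr_ge i.+1) (sqr_ge j.+1); set a := (i.+1 ^ 2)%N; set b := (j.+1 ^ 2)%N.
by clear; lia.
Qed.

Definition box_supported T (B : nat) :=
  forall n i j, T n i j != 0 -> [&& (n < B)%N, (i < B)%N & (j < B)%N].

Lemma finite_prop_offdiag_box S : finite_prop S -> exists B, box_supported (offdiag_part S) B.
Proof.
case=> L HL; exists (Num.truncn L).+1 => n i j; rewrite /offdiag_part /subY /diag_part.
case: ifP => [_|diag]; first by rewrite subrr eqxx.
rewrite subr0 => Sij; have := @dist_l1_lt n i j (Num.truncn L).+1; rewrite diag; apply.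
by rewrite ltNge; apply: contra Sij => /(le_trans (ltW (truncnS_gt L)))/HL/eqP.
Qed.

Lemma box_supported_finite_prop T B : box_supported T B -> finite_prop T.
Proof.
move=> HT; exists (B ^ 2 + B ^ 2 + B).+1%:R => n i j hL; apply: contraTeq hL.
case/HT/and3P=> nB iB jB; rewrite -ltNge (le_lt_trans (dist_l1_le n i j)) // ltr_nat ltnS.
by rewrite !leq_add // leq_exp2r.
Qed.

Lemma diag_supported_finite_prop T :
  (forall n i j, T n i j != 0 -> (i == j) && (n <= i)%N) -> finite_prop T.
Proof.
move=> HT; exists 2 => n i j; apply: contraTeq => /HT /andP [/eqP <- ni].
by rewrite dist_l1_diag // -ltNge; lra.
Qed.

Lemma finite_prop_addY T S : finite_prop T -> finite_prop S -> finite_prop (addY T S).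
Proof.
case=> [L1 H1] [L2 H2]; exists (Num.max L1 L2) => n i j hL.
by rewrite /addY H1 ?H2 ?addr0 // (le_trans _ hL) // le_max lexx ?orbT.
Qed.

(** * Compact operators on H_X *)

Lemma exists_gt0_2sqr_le (eta : R) : 0 < eta -> exists2 h, 0 < h & 2 * h ^+ 2 <= eta.
Proof.
move=> eta0; exists (Num.min eta 1 / 2); first by rewrite divr_gt0 // lt_min eta0 ltr01.
have m1 : Num.min eta 1 <= 1 by rewrite ge_min lexx orbT.
have me : Num.min eta 1 <= eta by rewrite ge_min lexx.
have m0 : 0 < Num.min eta 1 by rewrite lt_min eta0 ltr01.
have -> : 2 * (Num.min eta 1 / 2) ^+ 2 = Num.min eta 1 * Num.min eta 1 / 2 by field.
nra.
Qed.

Lemma nat_grid_approx (h : R) n y : 0 < h -> 0 <= y <= n%:R * h ->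
  exists2 k, (k <= n)%N & `|y - k%:R * h| <= h.
Proof.
move=> h0; elim: n y => [|n IH] y /andP[y0 yn].
  by exists 0%N; rewrite // mul0r subr0 ger0_norm //; rewrite mul0r in yn; lra.
case: (lerP y (n%:R * h)) => hy.
  by have [k kn hk] := IH y (introT andP (conj y0 hy)); exists k => //; exact: leqW.
exists n.+1 => //; rewrite ler_norml; rewrite -natr1 in yn *; apply/andP; split; nra.
Qed.

Lemma complex_ball_net (c eta : R) : 0 <= c -> 0 < eta -> exists r (g : nat -> C),
  forall z, nsq z <= c -> exists2 k, (k < r)%N & nsq (z - g k) <= eta.
Proof.
move=> c0 eta0; have [h h0 hh] := exists_gt0_2sqr_le eta0.
pose a := c + 1; have a0 : 0 < a by rewrite /a; lra.
have [n hn] : exists n : nat, 2 * a <= n%:R * h.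
  exists (Num.truncn (2 * a / h)).+1; rewrite -ler_pdivrMr //; exact/ltW/truncnS_gt.
(* grid of mesh h on the square [-a, a]^2, the point (k1, k2) having index k1 (n+1) + k2 *)
exists (n.+1 * n.+1)%N.
exists (fun k => Complex (- a + (k %/ n.+1)%:R * h) (- a + (k %% n.+1)%:R * h)).
case=> x y /= hz.
have coord t : t ^+ 2 <= c -> 0 <= t + a <= n%:R * h.
  move=> ht; have sq : t ^+ 2 < a ^+ 2 by rewrite /a; nra.
  by apply/andP; split; nra.
have [k1 k1n hk1] := nat_grid_approx h0 (coord x ltac:(have := sqr_ge0 y; lra)).
have [k2 k2n hk2] := nat_grid_approx h0 (coord y ltac:(have := sqr_ge0 x; lra)).
exists (k1 * n.+1 + k2)%N.
  apply: (@leq_trans (k1.+1 * n.+1)); first by rewrite mulSn [(n.+1 + _)%N]addnC ltn_add2l ltnS.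
  by rewrite leq_mul2r ltnS k1n orbT.
rewrite divnMDl // modnMDl divn_small ?modn_small ?addn0 //.
have sqr_le t : `|t| <= h -> t ^+ 2 <= h ^+ 2 by rewrite ler_norml => /andP[? ?]; nra.
have := sqr_le _ hk1; have := sqr_le _ hk2.
have -> : x - (- a + k1%:R * h) = x + a - k1%:R * h by ring.
have -> : y - (- a + k2%:R * h) = y + a - k2%:R * h by ring.
lra.
Qed.

Lemma finite_support_net (c eta : R) b : 0 <= c -> 0 < eta ->
  exists r (w : nat -> nat -> C), forall u : nat -> C,
    (forall i, (b <= i)%N -> u i = 0) -> (forall i, nsq (u i) <= c) ->
    exists2 k, (k < r)%N & forall i, nsq (u i - w k i) <= (if (i < b)%N then eta else 0).
Proof.
move=> c0 eta0; have [rg [g Hg]] := complex_ball_net c0 eta0.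
elim: b => [|b [r [w IH]]].
  by exists 1%N, (fun _ _ => 0) => u u0 _; exists 0%N => // i; rewrite u0 // subr0 nsq0.
exists (r * rg)%N, (fun k i => if i == b then g (k %% rg)%N else w (k %/ rg)%N i) => u u0 uc.
pose u' (i : nat) := if i == b then 0 else u i.
have [k1 k1r hk1] : exists2 k, (k < r)%N & forall i,
    nsq (u' i - w k i) <= (if (i < b)%N then eta else 0).
  apply: IH => i; rewrite /u'; case: eqVneq => [_|ib]; rewrite ?nsq0 //.
  by move=> bi; apply: u0; rewrite ltn_neqAle eq_sym ib.
have [k2 k2r hk2] := Hg (u b) (uc b).
exists (k1 * rg + k2)%N.
  apply: (@leq_trans (k1.+1 * rg)); first by rewrite mulSn [(rg + _)%N]addnC ltn_add2l.
  by rewrite leq_mul2r k1r orbT.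
move=> i; rewrite modnMDl divnMDl ?(leq_ltn_trans _ k2r) // modn_small // divn_small // addn0.
case: (eqVneq i b) => [->|ib]; first by rewrite ltnSn.
move: (hk1 i); rewrite /u' /= (negbTE ib).
by rewrite [(i < b.+1)%N]ltnS [(i <= b)%N]leq_eqVlt (negbTE ib).
Qed.

Lemma finite_rows_compactX A B : boundedX A ->
  (forall i j, (B <= i)%N -> A i j = 0) -> compactX A.
Proof.
case/boundedXE=> c c0 HA A0; split; first by apply/boundedXE; exists c.
move=> eps eps0; pose eta := eps ^+ 2 / B.+1%:R.
have eta0 : 0 < eta by rewrite divr_gt0 ?exprn_gt0.
have [r [w Hw]] := finite_support_net B c0 eta0.
exists r, w => N v v1.
have Av0 i : (B <= i)%N -> appX A N v i = 0.
  by move=> Bi; rewrite /appX big1 // => j _; rewrite A0 // mul0r.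
have Avc i : nsq (appX A N v i) <= c.
  apply: le_trans (_ : c * vnorm2 N v <= _); last by rewrite ler_piMr.
  apply: le_trans (HA N v i.+1).
  by apply: (sum_nat_ge_term (f := fun i => nsq (appX A N v i))) => // *; exact: nsq_ge0.
have [k kr hk] := Hw _ Av0 Avc; exists k; split => //.
apply/nneseries_leP => [i|M]; first exact: nsq_ge0.
apply: le_trans (_ : \sum_(0 <= i < M) (if (i < B)%N then eta else 0) <= _).
  by apply: ler_sum.
apply: le_trans (sum_nat_trunc_le _ _ _) _ => [i|]; first exact: ltW.
rewrite sumr_const_nat subn0 -mulr_natl /eta mulrCA ler_piMr ?sqr_ge0 //.
by rewrite ler_pdivrMr ?ltr0Sn // mul1r ler_nat.
Qed.

Definition subX A F : opX R := fun i j => A i j - F i j.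

Lemma appX_subX A F N v i : appX (subX A F) N v i = appX A N v i - appX F N v i.
Proof. by rewrite /appX -sumrB; apply: eq_bigr => j _; rewrite /subX mulrBl. Qed.

Lemma compactX_of_approx A : boundedX A ->
  (forall eps, 0 < eps -> exists2 F, compactX F & normX2_le (subX A F) eps) -> compactX A.
Proof.
move=> Ab HA; split=> // eps eps0.
have [F [_ Fnet] AF] := HA (eps ^+ 2 / 8) ltac:(by rewrite divr_gt0 ?exprn_gt0).
have [r [w Hw]] := Fnet (eps / 2) ltac:(by rewrite divr_gt0).
exists r, w => N v v1; have [k [kr hk]] := Hw N v v1; exists k; split => //.
apply/nneseries_leP => [i|M]; first exact: nsq_ge0.
move/nneseries_leP: hk => /(_ (fun i => nsq_ge0 _) M) hk.
apply: le_trans (@ler_sum_2sum 0 M (fun i => nsq (appX (subX A F) N v i))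
  (fun i => nsq (appX F N v i - w k i)) _ _) _.
  move=> i; rewrite appX_subX.
  by rewrite -[appX A N v i - _](subrKA (appX F N v i)) nsqD_le.
have AF_le : \sum_(0 <= i < M) nsq (appX (subX A F) N v i) <= eps ^+ 2 / 8.
  by apply: le_trans (AF N v M) _; rewrite ler_piMr ?divr_ge0 ?sqr_ge0.
move: hk; rewrite (_ : (eps / 2) ^+ 2 = eps ^+ 2 / 4); last by field.
by have := sqr_ge0 eps; lra.
Qed.

Lemma sum_nat_tail_small (u : nat -> R) c eps : (forall i, 0 <= u i) ->
  (forall M, \sum_(0 <= i < M) u i <= c) -> 0 < eps ->
  \forall M \near \oo, forall M', \sum_(M <= i < M') u i <= eps.
Proof.
move=> u0 uc eps0.
suff [M0 HM0] : exists M0, forall M M', (M0 <= M)%N -> \sum_(M <= i < M') u i <= eps.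
  by exists M0 => // M /= M0M M'; exact: HM0.
apply: contrapT => no_tail.
have big_tail M : exists M', eps < \sum_(M <= i < M') u i.
  apply: contrapT => small; apply: no_tail; exists M => M1 M' MM1.
  rewrite leNgt; apply/negP => big; apply: small; exists M'.
  by apply: lt_le_trans big _; exact: sum_nat_le_lower.
have unbounded (k : nat) : exists M, k%:R * eps <= \sum_(0 <= i < M) u i.
  elim: k => [|k [M hM]]; first by exists 0%N; rewrite mul0r big_geq.
  have [M' hM'] := big_tail M.
  have MM' : (M <= M')%N.
    by rewrite leqNgt; apply/negP => M'M; rewrite big_geq ?(ltnW M'M) // in hM'; lra.
  by exists M'; rewrite (big_cat_nat (leq0n M) MM') /= -natr1 mulrDl mul1r; lra.
have [M hM] := unbounded (Num.truncn (c / eps)).+1.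
have := uc M; have := truncnS_gt (c / eps); rewrite ltr_pdivrMr //; lra.
Qed.

Lemma sum_nsq_appX_le_scale A N m M' eps : 0 <= eps ->
  (forall v, vnorm2 N v <= 1 -> \sum_(m <= i < M') nsq (appX A N v i) <= eps) ->
  forall v, \sum_(m <= i < M') nsq (appX A N v i) <= eps * vnorm2 N v.
Proof.
move=> eps0 H v; have [v0|vpos] := eqVneq (vnorm2 N v) 0.
  have vz (j : 'I_N) : v j = 0.
    by apply: nsq_eq0; move/psumr_eq0P: v0; apply=> // *; exact: nsq_ge0.
  by rewrite v0 mulr0 big1 // => i _; rewrite /appX big1 ?nsq0 // => j _; rewrite vz mulr0.
have {}vpos : 0 < vnorm2 N v by rewrite lt_def vpos vnorm2_ge0.
pose t := (Num.sqrt (vnorm2 N v))^-1.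
have t2 : t ^+ 2 * vnorm2 N v = 1 by rewrite exprVn sqr_sqrtr ?mulVf ?(ltW vpos) // gt_eqF.
have nsq_t z : nsq (Complex t 0 * z) = t ^+ 2 * nsq z.
  by rewrite nsqM [nsq (Complex t 0)]nsqE /= expr0n addr0.
have vnorm2_t : vnorm2 N (fun j => Complex t 0 * v j) = 1.
  by rewrite -t2 /vnorm2 mulr_sumr; apply: eq_bigr => j _; rewrite nsq_t.
have appX_t i : appX A N (fun j => Complex t 0 * v j) i = Complex t 0 * appX A N v i.
  by rewrite /appX mulr_sumr; apply: eq_bigr => j _; rewrite mulrCA.
have := H (fun j => Complex t 0 * v j); rewrite vnorm2_t lexx => /(_ isT).
under eq_bigr do rewrite appX_t nsq_t.
rewrite -mulr_sumr => ht.
have -> : \sum_(m <= i < M') nsq (appX A N v i) =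
    (t ^+ 2 * \sum_(m <= i < M') nsq (appX A N v i)) * vnorm2 N v.
  by rewrite mulrAC t2 mul1r.
by rewrite ler_wpM2r ?vnorm2_ge0.
Qed.

Lemma compactX_row_tail A eps : compactX A -> 0 < eps ->
  \forall M \near \oo, forall N v M', \sum_(M <= i < M') nsq (appX A N v i) <= eps * vnorm2 N v.
Proof.
case=> /boundedXE [c c0 Ac] Anet eps0; pose d := eps / 10.
have d0 : 0 < d by rewrite divr_gt0.
have [e e0 ed] := exists_gt0_2sqr_le d0.
have [r [w Hw]] := Anet e e0.
pose close k N v := vnorm2 N v <= 1 /\
  forall M, \sum_(0 <= i < M) nsq (appX A N v i - w k i) <= d.
have near_net N v : vnorm2 N v <= 1 -> exists2 k, (k < r)%N & close k N v.
  move=> v1; have [k [kr /nneseries_leP hk]] := Hw N v v1; exists k => //; split => // M.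
  by apply: le_trans (hk (fun i => nsq_ge0 _) M) _; have := sqr_ge0 e; lra.
(* a vector of the unit ball close to the net point w k forces w k to have small
   tails; there are finitely many net points *)
have w_tail (k : 'I_r) : \forall M \near \oo,
    (exists N v, close k N v) -> forall M', \sum_(M <= i < M') nsq (w k i) <= 4 * d.
  case: (pselect (exists N v, close k N v)) => [[N0 [v0 [v01 hv0]]]|nk]; last first.
    by apply: nearW => M /nk.
  have Av0_le M : \sum_(0 <= i < M) nsq (appX A N0 v0 i) <= c.
    by apply: le_trans (Ac N0 v0 M) _; rewrite ler_piMr.
  apply: filterS (sum_nat_tail_small (fun i => nsq_ge0 _) Av0_le d0) => M HM _ M'.
  apply: le_trans (@ler_sum_2sum M M' (fun i => nsq (appX A N0 v0 i))
    (fun i => nsq (appX A N0 v0 i - w k i)) _ _) _.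
    by move=> i; rewrite -{1}[w k i](subKr (appX A N0 v0 i)); exact: nsqB_le.
  have := HM M'; have : \sum_(M <= i < M') nsq (appX A N0 v0 i - w k i) <= d.
    by apply: le_trans (hv0 M'); apply: sum_nat_le_lower => // *; exact: nsq_ge0.
  lra.
have [M0 _ HM0] := filter_forall _ w_tail; exists M0 => // M /HM0 HM N v M'.
apply: sum_nsq_appX_le_scale; first exact: ltW.
move=> v' v1; have [k kr [_ hk]] := near_net N v' v1.
have := HM (Ordinal kr) (ex_intro _ N (ex_intro _ v' (conj v1 hk))) M'.
have : \sum_(M <= i < M') nsq (appX A N v' i - w k i) <= d.
  by apply: le_trans (hk M'); apply: sum_nat_le_lower => // *; exact: nsq_ge0.
have split_w i : nsq (appX A N v' i) <= 2 * nsq (appX A N v' i - w k i) + 2 * nsq (w k i).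
  by rewrite -{1}[appX A N v' i](subrK (w k i)); exact: nsqD_le.
have := ler_sum_2sum M M' split_w; rewrite /d; lra.
Qed.

Lemma sum_mul_sqr_le N (x y : nat -> R) :
  (\sum_(j < N) x j * y j) ^+ 2 <= (\sum_(j < N) x j ^+ 2) * (\sum_(j < N) y j ^+ 2).
Proof.
set X := \sum_(j < N) x j ^+ 2; set Y := \sum_(j < N) y j ^+ 2; set P := \sum_(j < N) _.
have inner j : \sum_(k < N) (x j * y k - x k * y j) ^+ 2 =
    x j ^+ 2 * Y - 2 * (x j * y j) * P + X * y j ^+ 2.
  rewrite /X /Y /P !mulr_sumr mulr_suml -sumrB -big_split /=.
  by apply: eq_bigr => k _; ring.
have lagrange : \sum_(j < N) \sum_(k < N) (x j * y k - x k * y j) ^+ 2 = 2 * (X * Y - P ^+ 2).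
  under eq_bigr => j _ do rewrite inner.
  rewrite big_split sumrB /= -!mulr_suml -mulr_sumr.
  by rewrite -mulr_sumr -/X -/P -/Y; ring.
have : 0 <= 2 * (X * Y - P ^+ 2).
  by rewrite -lagrange; do 2 apply: sumr_ge0 => * //; exact: sqr_ge0.
lra.
Qed.

Lemma nsq_sum_mul_le N (a v : nat -> C) :
  nsq (\sum_(j < N) a j * v j) <= 2 * ((\sum_(j < N) nsq (a j)) * (\sum_(j < N) nsq (v j))).
Proof.
have sum_nsqE (f : nat -> C) : \sum_(j < N) nsq (f j) =
    \sum_(j < N) complex.Re (f j) ^+ 2 + \sum_(j < N) complex.Im (f j) ^+ 2.
  by rewrite -big_split; apply: eq_bigr => j _; rewrite nsqE.
rewrite nsqE complexRe_sum complexIm_sum !sum_nsqE.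
under eq_bigr => j _ do rewrite complexReM.
under [X in _ + X ^+ 2 <= _]eq_bigr => j _ do rewrite complexImM.
rewrite sumrB big_split /=.
have := sum_mul_sqr_le N (fun j => complex.Re (a j)) (fun j => complex.Re (v j)).
have := sum_mul_sqr_le N (fun j => complex.Im (a j)) (fun j => complex.Im (v j)).
have := sum_mul_sqr_le N (fun j => complex.Re (a j)) (fun j => complex.Im (v j)).
have := sum_mul_sqr_le N (fun j => complex.Im (a j)) (fun j => complex.Re (v j)).
set p := \sum_(j < N) complex.Re (a j) * complex.Re (v j).
set q := \sum_(j < N) complex.Im (a j) * complex.Im (v j).
set p' := \sum_(j < N) complex.Re (a j) * complex.Im (v j).
set q' := \sum_(j < N) complex.Im (a j) * complex.Re (v j).
have := sqr_ge0 (p + q); have := sqr_ge0 (p' - q'); nra.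
Qed.

Lemma sum_nsq_row_le A c i N : 0 <= c -> normX2_le A c -> \sum_(j < N) nsq (A i j) <= c.
Proof.
move=> c0 HA; set s := \sum_(j < N) _; have s0 : 0 <= s by apply: sumr_ge0 => *; exact: nsq_ge0.
pose v j := Complex (complex.Re (A i j)) (- complex.Im (A i j)).
have vnorm2_v : vnorm2 N v = s by apply: eq_bigr => j _; rewrite !nsqE /= sqrrN.
have appX_v : appX A N v i = Complex s 0.
  rewrite /appX; apply/eqP; rewrite eq_complex complexRe_sum complexIm_sum /=.
  apply/andP; split; apply/eqP; last by rewrite big1 // => j _; rewrite complexImM /=; ring.
  by apply: eq_bigr => j _; rewrite complexReM nsqE /=; ring.
have := HA N v i.+1; rewrite vnorm2_v => Hs.
have : s ^+ 2 <= c * s.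
  have -> : s ^+ 2 = nsq (appX A N v i) by rewrite appX_v nsqE /= expr0n addr0.
  apply: le_trans Hs.
  by apply: (sum_nat_ge_term (f := fun i => nsq (appX A N v i))) => // *; exact: nsq_ge0.
by nra.
Qed.

Definition col_cut A M : opX R := fun i j => if (M <= j)%N then A i j else 0.

Lemma col_cut_tail A c M eps : 0 <= c -> normX2_le A c -> 0 < eps ->
  \forall M' \near \oo, forall N v,
    \sum_(0 <= i < M) nsq (appX (col_cut A M') N v i) <= eps * vnorm2 N v.
Proof.
move=> c0 HA eps0; pose d := eps / (2 * M.+1%:R).
have d0 : 0 < d by rewrite divr_gt0 // mulr_gt0 // ltr0Sn.
have row_tail (i : 'I_M) : \forall M' \near \oo, forall N, \sum_(M' <= j < N) nsq (A i j) <= d.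
  apply: (@sum_nat_tail_small (fun j => nsq (A i j)) c) => // [j|N]; first exact: nsq_ge0.
  by rewrite big_mkord; exact: sum_nsq_row_le.
have [M0 _ HM0] := filter_forall _ row_tail; exists M0 => // M' /HM0 HM' N v.
apply: le_trans (_ : \sum_(0 <= i < M) (2 * d * vnorm2 N v) <= _).
  apply: ler_sum_nat => i /andP[_ iM]; apply: le_trans (nsq_sum_mul_le _ _ _) _.
  rewrite mulrA ler_wpM2r ?vnorm2_ge0 // ler_wpM2l //.
  have -> : \sum_(j < N) nsq (col_cut A M' i j) = \sum_(M' <= j < N) nsq (A i j).
    rewrite big_geq_mkord [RHS]big_mkcond; apply: eq_bigr => j _.
    by rewrite /col_cut; case: ifP; rewrite ?nsq0.
  exact: (HM' (Ordinal iM) N).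
rewrite sumr_const_nat subn0 -[_ *+ M]mulr_natl.
have -> : M%:R * (2 * d * vnorm2 N v) = eps * (M%:R / M.+1%:R) * vnorm2 N v.
  by rewrite /d; field; rewrite addrC natr1 pnatr_eq0.
apply: ler_wpM2r; first exact: vnorm2_ge0.
by rewrite ler_piMr ?(ltW eps0) // ler_pdivrMr ?ltr0Sn // mul1r ler_nat.
Qed.

Definition cutX A M M' : opX R := fun i j => if (i < M)%N && (j < M')%N then A i j else 0.

Lemma compactX_cutX_approx A d : compactX A -> 0 < d ->
  \forall M \near \oo, \forall M' \near \oo, normX2_le (subX A (cutX A M M')) (2 * d).
Proof.
move=> Ac d0; have [c c0 HA] := proj1 (boundedXE A) (proj1 Ac).
apply: filterS (compactX_row_tail Ac d0) => M rows_tail.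
apply: filterS (col_cut_tail M c0 HA d0) => M' cols_tail N v M2.
apply: le_trans (sum_nat_split_le M M2 (fun i => nsq_ge0 _)) _.
have -> : 2 * d * vnorm2 N v = d * vnorm2 N v + d * vnorm2 N v by ring.
apply: lerD.
  rewrite (eq_big_nat _ _ (F2 := fun i => nsq (appX (col_cut A M') N v i))) ?cols_tail //.
  move=> i /andP[_ iM]; congr nsq; apply: eq_bigr => j _.
  by rewrite /subX /cutX /col_cut iM /=; case: ltnP => _; rewrite ?subrr ?subr0.
rewrite (eq_big_nat _ _ (F2 := fun i => nsq (appX A N v i))) ?rows_tail //.
move=> i /andP[Mi _]; congr nsq; apply: eq_bigr => j _.
by rewrite /subX /cutX ltnNge Mi /= subr0.
Qed.

(** * The two inclusions *)

Lemma ell2'_normY2_le (P : opX R -> Prop) T : ell2' P T -> exists2 c, 0 <= c & normY2_le T c.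
Proof.
case=> _ [c Hc]; exists (Num.max c 0); first by rewrite le_max lexx orbT.
move=> N v M1 M2; apply: le_trans (_ : c * vnorm2 N v <= _).
  by move/blocksum_leP: (Hc M1 N v); apply.
by rewrite ler_wpM2r ?vnorm2_ge0 // le_max lexx.
Qed.

Lemma ell2_normY2_le (P : opX R -> Prop) K : (forall A, P A -> boundedX A) ->
  ell2 P K -> exists2 c, 0 <= c & normY2_le K c.
Proof.
move=> Pb [PK Kt]; have [m0 Hm0] := Kt 1 ltr01.
have blk (n : 'I_m0) : \forall c \near +oo, normX2_le (block K n) c.
  have [c _ Hc] := proj1 (boundedXE _) (Pb _ (PK n)).
  by apply: filterS (nbhs_pinfty_ge (num_real c)) => c'; apply: normX2_leW.
have [M [_ HM]] := filter_forall _ blk.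
pose c := Num.max M 0 + 1.
have c0 : 0 <= c by rewrite /c addr_ge0 // le_max lexx orbT.
have Hc : forall n : 'I_m0, normX2_le (block K n) c.
  by apply: HM; rewrite /c ltr_pwDr // le_max lexx.
exists (m0%:R * c + 1); first by rewrite addr_ge0 ?mulr_ge0.
move=> N v M1 M2.
apply: le_trans (sum_nat_split_le m0 M1 (fun n => sumr_ge0 _ (fun i _ => nsq_ge0 _))) _.
rewrite mulrDl; apply: lerD; last by move/blocksum_leP: (Hm0 m0 M1 N v (leqnn _)); apply.
apply: le_trans (_ : \sum_(0 <= n < m0) (c * vnorm2 N v) <= _).
  by apply: ler_sum_nat => n /andP[_ nm0]; exact: (Hc (Ordinal nm0)).
by rewrite sumr_const_nat subn0 -[_ *+ m0]mulr_natl mulrA.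
Qed.

Definition box_cut K m0 M M' : opY R :=
  fun n i j => if (n < m0)%N then cutX (block K n) M M' i j else 0.

Lemma box_cut_supported K m0 M M' : box_supported (box_cut K m0 M M') (maxn m0 (maxn M M')).
Proof.
move=> n i j; rewrite /box_cut /cutX; case: ifP => [nm0|_]; last by rewrite eqxx.
case: ifP => [/andP[iM jM] _|_]; last by rewrite eqxx.
by rewrite !leq_max nm0 iM jM !orbT.
Qed.

Lemma ell2_box_cut_approx K eps : ell2 (@compactX R) K -> 0 < eps ->
  exists m0 M M', normY2_le (subY K (box_cut K m0 M M')) eps.
Proof.
case=> Kc Kt eps0; have [m0 Hm0] := Kt (eps / 2) ltac:(by rewrite divr_gt0).
pose d := eps / (4 * m0.+1%:R).
have d0 : 0 < d by rewrite divr_gt0 // mulr_gt0 // ltr0Sn.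
have [M _ HM] := filter_forall _ (fun n : 'I_m0 => compactX_cutX_approx (Kc n) d0).
have [M' _ HM'] := filter_forall _ (HM M (leqnn M)).
exists m0, M, M' => N v M1 M2.
apply: le_trans (sum_nat_split_le m0 M1 (fun n => sumr_ge0 _ (fun i _ => nsq_ge0 _))) _.
have -> : eps * vnorm2 N v = eps / 2 * vnorm2 N v + eps / 2 * vnorm2 N v by field.
apply: lerD.
  apply: le_trans (_ : \sum_(0 <= n < m0) (2 * d * vnorm2 N v) <= _).
    apply: ler_sum_nat => n /andP[_ nm0].
    rewrite (eq_bigr (fun i => nsq (appX (subX (block K n) (cutX (block K n) M M')) N v i))).
      exact: (HM' M' (leqnn M') (Ordinal nm0) N v M2).
    by move=> i _; congr nsq; apply: eq_bigr => j _; rewrite /subY /box_cut nm0.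
  rewrite sumr_const_nat subn0 -[_ *+ m0]mulr_natl mulrA.
  apply: ler_wpM2r; first exact: vnorm2_ge0.
  have -> : m0%:R * (2 * d) = eps / 2 * (m0%:R / m0.+1%:R).
    by rewrite /d; field; rewrite addrC natr1 pnatr_eq0.
  by rewrite ler_piMr ?divr_ge0 ?(ltW eps0) // ler_pdivrMr ?ltr0Sn // mul1r ler_nat.
rewrite (eq_big_nat _ _ (F2 := fun n => \sum_(0 <= i < M2) nsq (appY K N v n i))).
  by move/blocksum_leP: (Hm0 m0 M1 N v (leqnn _)); apply.
move=> n /andP[m0n _]; apply: eq_bigr => i _; congr nsq; apply: eq_bigr => j _.
by rewrite /subY /box_cut ltnNge m0n subr0.
Qed.

Lemma ell2'0D_diag_supported D : ell2'0D D ->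
  forall n i j, D n i j != 0 -> (i == j) && (n <= i)%N.
Proof.
case=> -[Dd _] D0 n i j; case: (eqVneq i j) => [<- /=|ij].
  by case: ltnP => // ni; rewrite D0 ?eqxx.
by rewrite [D n i j](Dd n).2 ?eqxx //; exact/eqP.
Qed.

Lemma ell2_ell2'0D_MYd K D : ell2 (@compactX R) K -> ell2'0D D -> MYd (addY K D).
Proof.
move=> HK HD; have [cK cK0 Kb] := ell2_normY2_le (fun A (HA : compactX A) => HA.1) HK.
have [cD cD0 Db] := ell2'_normY2_le HD.1.
split; first by apply/boundedYE; exists (2 * cK + 2 * cD); [lra|exact: normY2_leD].
move=> eps eps0; have [m0 [M [M' Kcut]]] := ell2_box_cut_approx HK (exprn_gt0 2 eps0).
have cut_eq : box_cut K m0 M M' = subY K (subY K (box_cut K m0 M M')).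
  by apply/funext => n; apply/funext => i; apply/funext => j; rewrite /subY; ring.
exists (addY (box_cut K m0 M M') D); split; [|split].
- apply/boundedYE; exists (2 * (2 * cK + 2 * eps ^+ 2) + 2 * cD).
    by have := sqr_ge0 eps; lra.
  by apply: normY2_leD => //; rewrite cut_eq; exact: normY2_leB.
- apply: finite_prop_addY.
    exact: box_supported_finite_prop (@box_cut_supported K m0 M M').
  exact/diag_supported_finite_prop/ell2'0D_diag_supported.
- apply/normY_leE; split; first exact: ltW.
  have -> : subY (addY K D) (addY (box_cut K m0 M M') D) = subY K (box_cut K m0 M M').
    by apply/funext => n; apply/funext => i; apply/funext => j; rewrite /subY /addY; ring.
  exact: Kcut.
Qed.

Lemma offdiag_part_subY T S :
  subY (offdiag_part T) (offdiag_part S) = offdiag_part (subY T S).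
Proof.
apply/funext => n; apply/funext => i; apply/funext => j.
by rewrite /offdiag_part /subY /diag_part; case: ifP => _; ring.
Qed.

Lemma normY2_le_offdiag_part T c : 0 <= c -> normY2_le T c ->
  normY2_le (offdiag_part T) (2 * c + 2 * c).
Proof. by move=> c0 Tc; apply: normY2_leB Tc (normY2_le_diag_part c0 Tc). Qed.

Lemma MYd_offdiag_box_approx T eps : MYd T -> 0 < eps -> exists (F : opY R) B,
  [/\ boundedY F, box_supported F B & normY2_le (subY (offdiag_part T) F) eps].
Proof.
case=> _ Tapprox eps0; have [h h0 hh] : exists2 h, 0 < h & 2 * h ^+ 2 <= eps / 2.
  by apply: exists_gt0_2sqr_le; rewrite divr_gt0.
have [S [/boundedYE [cS cS0 Sb] [Sfp /normY_leE [_ TS]]]] := Tapprox h h0.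
have [B SB] := finite_prop_offdiag_box Sfp.
exists (offdiag_part S), B; split => //.
  by apply/boundedYE; exists (2 * cS + 2 * cS); [lra|exact: normY2_le_offdiag_part].
rewrite offdiag_part_subY; apply: normY2_leW (normY2_le_offdiag_part (sqr_ge0 h) TS) _.
lra.
Qed.

Lemma MYd_offdiag_ell2 T : MYd T -> ell2 (@compactX R) (offdiag_part T).
Proof.
move=> HT; have [c c0 Tb] := proj1 (boundedYE T) HT.1.
split=> [n|eps eps0].
  apply: compactX_of_approx.
    apply/boundedXE; exists (2 * c + 2 * c); first lra.
    exact/normX2_le_block/normY2_le_offdiag_part.
  move=> eps eps0; have [F [B [Fb FB KF]]] := MYd_offdiag_box_approx HT eps0.
  exists (block F n); last exact: normX2_le_block KF.
  apply: (@finite_rows_compactX _ B).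
    have [cF cF0 /(normX2_le_block n) ?] := proj1 (boundedYE F) Fb.
    by apply/boundedXE; exists cF.
  move=> i j Bi; apply/eqP; apply: contraTT Bi => /FB /and3P[_ iB _].
  by rewrite -ltnNge.
have [F [B [_ FB KF]]] := MYd_offdiag_box_approx HT eps0.
exists B => m m' N v Bm; apply/blocksum_leP => M2.
rewrite (eq_big_nat _ _ (F2 := fun n => \sum_(0 <= i < M2)
  nsq (appY (subY (offdiag_part T) F) N v n i))).
  apply: le_trans (KF N v m' M2); apply: sum_nat_le_lower (leq0n m) => n.
  by apply: sumr_ge0 => *; exact: nsq_ge0.
move=> n /andP[mn _]; apply: eq_bigr => i _; congr nsq; apply: eq_bigr => j _.
rewrite /subY (_ : F n i j = 0) ?subr0 //; apply/eqP; apply: contraTT mn.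
by case/FB/and3P=> nB _ _; rewrite -ltnNge (leq_trans nB Bm).
Qed.

Lemma offdiag_diag_partE T : T = addY (offdiag_part T) (diag_part T).
Proof.
apply/funext => n; apply/funext => i; apply/funext => j.
by rewrite /addY /offdiag_part /subY subrK.
Qed.

End MYd_decomposition.

Theorem mainTheorem11 (R : realType) (T : opY R) :
  MYd T <->
  exists K D : opY R, ell2 (@compactX R) K /\ ell2'0D D /\ T = addY K D.
Proof.
split=> [HT|[K [D [HK [HD ->]]]]]; last exact: ell2_ell2'0D_MYd.
exists (offdiag_part T), (diag_part T); split; first exact: MYd_offdiag_ell2.
by split; [exact: diag_part_ell2'0D HT.1|exact: offdiag_diag_partE].
Qed.
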